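(* Let $m\ge1$ and, for $\mathfrak{g}\in\{\mathfrak{h},\mathfrak{r},\mathfrak{d}\}$, let $\mathcal{G}(q)=\max\{\mathfrak{g}(\tau):\tau\in T,\ \rho(\tau)\le q\}$. Then for $q\in\{\frac12,1,\frac32,2,\dots\}$: $\mathcal{G}(q)=2q$ for $\mathfrak{g}=\mathfrak{h}$ (simple iterations); $\mathcal{G}(q)=\lfloor q+\frac12\rfloor$ for $\mathfrak{g}=\mathfrak{r}$ (modified Newton iterations); $\mathcal{G}(q)=\lfloor\log_2(q+\frac12)\rfloor+1$ for $\mathfrak{g}=\mathfrak{d}$ (full Newton iterations). Moreover $\mathcal{G}(q)=\max\{\mathfrak{g}'(u):u\in U_f,\ \rho(u)\le q\}$.
   Context: $T$ is the set of $(m+1)$-colored rooted trees: the empty tree $\emptyset$ and all $\tau=[\tau_1,\dots,\tau_\kappa]_l$ with $l\in\{0,\dots,m\}$, $\kappa\ge0$, $\tau_1,\dots,\tau_\kappa\in T\setminus\{\emptyset\}$ (unordered), formed by joining the roots of the $\tau_j$ by edges to a new root of color $l$ ($\bullet_l$ when $\kappa=0$). Order: $\rho(\emptyset)=0$, $\rho([\tau_1,\dots,\tau_\kappa]_l)=\sum_j\rho(\tau_j)+1$ if $l=0$, and $=\sum_j\rho(\tau_j)+\frac12$ if $l\ge1$. $U_f$ is the set of trees $u=[\tau_1,\dots,\tau_\kappa]_f$, $\kappa\ge0$, $\tau_j\in T\setminus\{\emptyset\}$, with $\rho(u)=\sum_j\rho(\tau_j)$ and $\mathfrak{g}'(u)=\max_j\mathfrak{g}(\tau_j)$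 ($0$ if $\kappa=0$). Maxima over empty sets are $0$. $\mathfrak{h}(\emptyset)=0$, $\mathfrak{h}(\bullet_l)=1$, $\mathfrak{h}([\tau_1,\dots,\tau_\kappa]_l)=1+\max_j\mathfrak{h}(\tau_j)$; $\mathfrak{r}(\emptyset)=0$, $\mathfrak{r}(\bullet_l)=1$, $\mathfrak{r}([\tau_1]_l)=\mathfrak{r}(\tau_1)$, $\mathfrak{r}([\tau_1,\dots,\tau_\kappa]_l)=1+\max_j\mathfrak{r}(\tau_j)$ for $\kappa\ge2$; $\mathfrak{d}(\emptyset)=0$, $\mathfrak{d}(\bullet_l)=1$, $\mathfrak{d}([\tau_1,\dots,\tau_\kappa]_l)=M$ if exactly one $i$ has $\mathfrak{d}(\tau_i)=M:=\max_j\mathfrak{d}(\tau_j)$, and $M+1$ if at least two indices attain $M$. *)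

From mathcomp Require Import all_boot.
Set Implicit Arguments. Unset Strict Implicit. Unset Printing Implicit Defensive.

(* Non-empty (m+1)-colored rooted trees [tau_1,...,tau_k]_l, l : 'I_m.+1.
   Children are stored as a list; all quantities below are invariant under
   permutation of children, so this represents unordered trees faithfully
   for the purposes of the statement. The empty tree is [None : option (tree m)]. *)
Inductive tree (m : nat) : Type := Node of 'I_m.+1 & seq (tree m).

Section Funs.
Variable m : nat.

(* twice the order: rho2 t = 2 * rho t *)
Fixpoint rho2 (t : tree m) : nat :=
  match t with
  | Node l cs => sumn (map rho2 cs) + (if nat_of_ord l == 0 then 2 else 1)
  end.

Fixpoint hgt (t : tree m) : nat :=
  match t with Node _ cs => (\max_(c <- map hgt cs) c).+1 end.

Fixpoint rgt (t : tree m) : nat :=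
  match t with
  | Node _ [::] => 1
  | Node _ [:: c] => rgt c
  | Node _ cs => (\max_(c <- map rgt cs) c).+1
  end.

Fixpoint dgt (t : tree m) : nat :=
  match t with
  | Node _ [::] => 1
  | Node _ cs =>
      let ds := map dgt cs in
      let M := \max_(c <- ds) c in
      if 2 <= count (pred1 M) ds then M.+1 else M
  end.

Definition ext (f : tree m -> nat) (t : option (tree m)) : nat :=
  if t is Some t' then f t' else 0.

(* U_f : u = [tau_1,...,tau_k]_f, represented by its list of children;
   rho(u) = sum rho(tau_j), g'(u) = max g(tau_j) (0 if k = 0). *)
Definition rho2U (u : seq (tree m)) : nat := sumn (map rho2 u).
Definition primeU (f : tree m -> nat) (u : seq (tree m)) : nat :=
  \max_(c <- map f u) c.
End Funs.

Definition is_max_on (A : Type) (P : A -> Prop) (f : A -> nat) (v : nat) : Prop :=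
  (exists2 x, P x & f x = v) /\ (forall x, P x -> f x <= v).

(* For q = k/2 (k >= 1): G(q) = v and G(q) = max{g'(u) : u in U_f, rho(u) <= q} *)
Definition G_spec (m : nat) (g : tree m -> nat) (k v : nat) : Prop :=
  is_max_on (fun t : option (tree m) => ext (@rho2 m) t <= k) (ext g) v /\
  is_max_on (fun u : seq (tree m) => rho2U u <= k) (primeU g) v.

From mathcomp Require Import all_boot zify.
From Stdlib Require List.

Set Implicit Arguments.
Unset Strict Implicit.
Unset Printing Implicit Defensive.

(* Each of the three functions is bounded by a monotone function B of twice
   the order: h(t) <= 2 rho(t), r(t) <= floor(rho(t) + 1/2) and
   2^d(t) <= 2 rho(t) + 1, by induction on t.  For r, a node that increases
   the maximum has at least two children, each of order >= 1/2; for d, it has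
   two children of d-value M, each of order >= (2^M - 1)/2 by induction.
   Since B is monotone and orders add up, the same bound holds for forests,
   i.e. for U_f.  With a colour l >= 1 every vertex has order 1/2, and the
   bounds are attained by a path, by a comb (a path with a leaf hanging off
   each inner vertex) and by a complete binary tree. *)

Section MaxSumBounds.
Variables (A : Type) (g r : A -> nat).

Lemma bigmax_map_le_homo (B : nat -> nat) (s : seq A) :
  {homo B : x y / x <= y} -> List.Forall (fun c => g c <= B (r c)) s ->
  \max_(c <- map g s) c <= B (sumn (map r s)).
Proof.
move=> B_homo; elim: s => [|c s IHs]; first by rewrite big_nil.
case/List.Forall_cons_iff => gc gs; rewrite big_cons geq_max.
rewrite (leq_trans gc (B_homo _ _ (leq_addr _ _))).
by rewrite (leq_trans (IHs gs) (B_homo _ _ (leq_addl _ _))).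
Qed.

Lemma count_mul_le_sumn (F : nat -> nat) n (s : seq A) :
  List.Forall (fun c => F (g c) <= r c) s ->
  count (pred1 n) (map g s) * F n <= sumn (map r s).
Proof.
elim: s => [|c s IHs] // /List.Forall_cons_iff [gc gs] /=.
rewrite mulnDl leq_add ?IHs //.
by case: eqP => [<-|_]; rewrite ?mul1n.
Qed.
End MaxSumBounds.

Lemma leq_trunc_log2S_exp k n : (k <= trunc_log 2 n.+1) <-> (2 ^ k <= n.+1).
Proof.
split=> [le_k|]; last exact: trunc_log_max.
exact: leq_trans (leq_pexp2l _ le_k) (trunc_logP _ _).
Qed.

Lemma homo_half_succ : {homo (fun x => x.+1 %/ 2) : x y / x <= y}.
Proof. by move=> x y le_xy; apply: leq_div2r. Qed.

Lemma homo_trunc_log2S : {homo (fun x => trunc_log 2 x.+1) : x y / x <= y}.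
Proof. by move=> x y le_xy; apply: leq_trunc_log. Qed.

Section Trees.
Variable m : nat.
Implicit Types (t : tree m) (cs : seq (tree m)).

Definition tree_nested_ind (P : tree m -> Prop)
    (IH : forall l cs, List.Forall P cs -> P (Node l cs)) : forall t, P t :=
  fix F t := let: Node l cs := t in
    IH l cs ((fix Fs cs : List.Forall P cs :=
                if cs is c :: cs' then List.Forall_cons c (F c) (Fs cs')
                else List.Forall_nil P) cs).

Lemma rho2_gt0 t : 0 < rho2 t.
Proof. by case: t => l cs /=; case: (_ == 0); rewrite addn_gt0 orbT. Qed.

Lemma hgt_le_rho2 t : hgt t <= rho2 t.
Proof.
elim/tree_nested_ind: t => l cs IH /=.
have := bigmax_map_le_homo (B := id) (fun _ _ => id) IH.
by case: (_ == 0); lia.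
Qed.

Lemma rgt_le_rho2 t : rgt t <= (rho2 t).+1 %/ 2.
Proof.
elim/tree_nested_ind: t => l [|c1 [|c2 cs]] /= IH.
- by case: (_ == 0).
- by case/List.Forall_cons_iff: IH => r1 _; case: (_ == 0); lia.
- case/List.Forall_cons_iff: IH => r1 /List.Forall_cons_iff [r2 rs].
  have := bigmax_map_le_homo homo_half_succ rs.
  have := rho2_gt0 c1; have := rho2_gt0 c2.
  by rewrite !big_cons; case: (_ == 0); lia.
Qed.

Lemma rho2_Node l cs :
  rho2 (Node l cs) =
  sumn (map (@rho2 m) cs) + (if nat_of_ord l == 0 then 2 else 1).
Proof. by []. Qed.

Lemma dgt_Node_cons l c cs
    (ds := map (@dgt m) (c :: cs)) (M := \max_(d <- ds) d) :
  dgt (Node l (c :: cs)) = if 2 <= count (pred1 M) ds then M.+1 else M.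
Proof. by []. Qed.

Lemma dgt_le_rho2 t : dgt t <= trunc_log 2 (rho2 t).+1.
Proof.
elim/tree_nested_ind: t => l [|c cs] IH; apply/leq_trunc_log2S_exp.
  by rewrite /=; case: (_ == 0).
rewrite dgt_Node_cons rho2_Node.
set ds := map _ _; set M := \max_(d <- ds) d; set s := sumn _.
have /leq_trunc_log2S_exp le_M : M <= trunc_log 2 s.+1.
  exact: (bigmax_map_le_homo (B := fun x => trunc_log 2 x.+1)
           homo_trunc_log2S IH).
have le_count : count (pred1 M) ds * (2 ^ M).-1 <= s.
  apply: (count_mul_le_sumn (F := fun n => (2 ^ n).-1)).
  by apply: List.Forall_impl IH => d /leq_trunc_log2S_exp; lia.
have exp_gt0 : 0 < 2 ^ M by rewrite expn_gt0.
case: ifP => [two_le|_]; last by case: (_ == 0); lia.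
have : 2 * (2 ^ M).-1 <= s.
  by apply: leq_trans le_count; rewrite leq_mul2r two_le orbT.
by rewrite expnS; case: (_ == 0); lia.
Qed.

Lemma primeU_le_homo (g : tree m -> nat) (B : nat -> nat) u :
  {homo B : x y / x <= y} -> (forall t, g t <= B (rho2 t)) ->
  primeU g u <= B (rho2U u).
Proof.
move=> B_homo g_le; apply: bigmax_map_le_homo => //.
by apply/List.Forall_forall => t _.
Qed.

Lemma G_spec_of_bound (g : tree m -> nat) (B : nat -> nat) k t :
  {homo B : x y / x <= y} -> (forall t, g t <= B (rho2 t)) ->
  rho2 t <= k -> g t = B k -> G_spec g k (B k).
Proof.
move=> B_homo g_le le_tk gt_eq; split; split.
- by exists (Some t).
- by case=> [x|] //= le_xk; apply: leq_trans (g_le x) (B_homo _ _ le_xk).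
- by exists [:: t]; rewrite /rho2U /primeU /= ?addn0 // big_seq1.
- move=> u le_uk; apply: leq_trans (B_homo _ _ le_uk).
  exact: primeU_le_homo.
Qed.

Definition leaf : tree m := Node ord_max [::].

Fixpoint path_tree j : tree m :=
  if j is j.+1 then Node ord_max [:: path_tree j] else leaf.

Fixpoint comb_tree j : tree m :=
  if j is j.+1 then Node ord_max [:: comb_tree j; leaf] else leaf.

Fixpoint complete_tree j : tree m :=
  if j is j.+1 then Node ord_max [:: complete_tree j; complete_tree j] else leaf.

Lemma hgt_path_tree j : hgt (path_tree j) = j.+1.
Proof. by elim: j => [|j IHj] /=; rewrite ?big_nil // big_seq1 IHj. Qed.

Lemma rgt_comb_tree j : rgt (comb_tree j) = j.+1.
Proof.
elim: j => [|j IHj] //=.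
by rewrite !big_cons big_nil IHj maxn0 (maxn_idPl _).
Qed.

Lemma dgt_complete_tree j : dgt (complete_tree j) = j.+1.
Proof.
by elim: j => [|j IHj] //=; rewrite !big_cons big_nil IHj maxn0 maxnn /= eqxx.
Qed.

Hypothesis m_gt0 : 0 < m.

Lemma ord_max_neq0 : (nat_of_ord (@ord_max m) == 0) = false.
Proof. by apply/negbTE; rewrite -lt0n. Qed.

Lemma rho2_path_tree j : rho2 (path_tree j) = j.+1.
Proof. by elim: j => [|j IHj] /=; rewrite ord_max_neq0 ?IHj; lia. Qed.

Lemma rho2_comb_tree j : rho2 (comb_tree j) = j.*2.+1.
Proof. by elim: j => [|j IHj] /=; rewrite ord_max_neq0 ?IHj; lia. Qed.

Lemma rho2_complete_tree j : (rho2 (complete_tree j)).+1 = 2 ^ j.+1.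
Proof. by elim: j => [|j IHj] /=; rewrite ord_max_neq0; [|rewrite expnS]; lia. Qed.
End Trees.

Theorem mainTheorem7 (m : nat) (hm : 1 <= m) (k : nat) (hk : 1 <= k) :
  G_spec (@hgt m) k k /\
  G_spec (@rgt m) k (k.+1 %/ 2) /\
  G_spec (@dgt m) k (trunc_log 2 k.+1).
Proof.
split; [|split].
- apply: (G_spec_of_bound (B := id) (t := path_tree m k.-1)) => //.
  + exact: hgt_le_rho2.
  + by rewrite rho2_path_tree //; lia.
  + by rewrite hgt_path_tree; lia.
- apply: (G_spec_of_bound (B := fun x => x.+1 %/ 2)
           (t := comb_tree m (k.+1 %/ 2).-1)).
  + exact: homo_half_succ.
  + exact: rgt_le_rho2.
  + by rewrite rho2_comb_tree //; lia.
  + by rewrite rgt_comb_tree; lia.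
- set d := trunc_log 2 k.+1.
  have d_gt0 : 0 < d by rewrite trunc_log_gt0.
  have /leq_trunc_log2S_exp exp_d : d <= trunc_log 2 k.+1 by [].
  apply: (G_spec_of_bound (B := fun x => trunc_log 2 x.+1)
           (t := complete_tree m d.-1)).
  + exact: homo_trunc_log2S.
  + exact: dgt_le_rho2.
  + by rewrite -ltnS (rho2_complete_tree hm) prednK.
  + by rewrite dgt_complete_tree prednK.
Qed.
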